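(* The class of data languages accepted by SAFA is not closed under Kleene closure: there exists a data language $L$ accepted by some SAFA such that no SAFA accepts $L^*=\{u_1u_2\cdots u_n: n\geq 0,\ u_i\in L\}$.
   Context: $D$ is a fixed countably infinite set of data values; for a finite alphabet $\Sigma$, data words are elements of $(\Sigma\times D)^*$. A set augmented finite automaton (SAFA) is a tuple $M=(Q,\Sigma\times D,q_0,F,H,\delta)$: $Q$ finite set of states, $q_0\in Q$ initial, $F\subseteq Q$ final, $H=\{h_1,\dots,h_m\}$ a finite collection of (names of) sets of data values, $\delta\subseteq Q\times\Sigma\times C\times OP\times Q$ with $C=\{p(h_i),\,!p(h_i): h_i\in H\}$, $OP=\{-\}\cup\{\mathsf{ins}(h_i):h_i\in H\}$. Configurations are $(q,\langle S_1,\dots,S_m\rangle)$ with $S_i\subseteq D$ finite; initially state $q_0$ and all sets empty. On reading $(a,d)$, a transition $(q,a,\alpha,op,q')$ from the current state may be taken if $\alpha=p(h_i)$ and $d\in S_i$, or $\alpha=\,!p(h_i)$ and $d\notin S_i$; then the state becomes $q'$ and if $op=\mathsf{ins}(h_j)$ the value $d$ is added to $S_j$ ($op=-$ changes nothing). A word is accepted if some run reads it entirely and ends in $F$; $L(M)$ is the set of accepted words. *)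

(* Data values D are modelled by nat (a fixed countably
   infinite set). *)
From mathcomp Require Import all_boot.
Set Implicit Arguments. Unset Strict Implicit. Unset Printing Implicit Defensive.

Definition data := nat.

Definition dword (Sigma : finType) := seq (Sigma * data).
Definition dlang (Sigma : finType) := dword Sigma -> Prop.

(* Conditions p(h_i) / !p(h_i) and operations -, ins(h_i), for H = {h_0..h_{m-1}}. *)
Inductive cond (m : nat) := CIn of 'I_m | CNotIn of 'I_m.
Inductive op (m : nat) := ONop | OIns of 'I_m.

(* A SAFA: finite state set Q, initial q0, final states F, m sets, and a
   (finite, since all components are finite) transition relation delta. *)
Record safa (Sigma : finType) := Safa {
  st : finType;
  q0 : st;
  final : pred st;
  nsets : nat;
  delta : st -> Sigma -> cond nsets -> op nsets -> st -> bool }.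

(* Set contents: each set is a finite set of data values, represented by a list. *)
Definition sets (m : nat) := 'I_m -> seq data.

Definition sat m (c : cond m) (S : sets m) (d : data) : bool :=
  match c with
  | CIn i => d \in S i
  | CNotIn i => d \notin S i
  end.

Definition upd m (o : op m) (S : sets m) (d : data) : sets m :=
  match o with
  | ONop => S
  | OIns j => fun i => if i == j then d :: S i else S i
  end.

Fixpoint acc_from Sigma (M : safa Sigma) (q : st M) (S : sets (nsets M))
    (w : dword Sigma) : Prop :=
  match w with
  | [::] => final q
  | (a, d) :: w' => exists (c : cond (nsets M)) (o : op (nsets M)) (q' : st M),
      [/\ delta q a c o q', sat c S d & acc_from q' (upd o S d) w']
  end.

Definition empty_sets m : sets m := fun _ => [::].

Definition lang Sigma (M : safa Sigma) : dlang Sigma :=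
  fun w => acc_from (q0 M) (@empty_sets (nsets M)) w.

Definition safa_lang Sigma (L : dlang Sigma) : Prop :=
  exists M : safa Sigma, forall w, lang M w <-> L w.

Definition kstar Sigma (L : dlang Sigma) : dlang Sigma :=
  fun w => exists us : seq (dword Sigma), (forall u, u \in us -> L u) /\ w = flatten us.

(* Take L = { d d : d a data value }, so that L^* consists of the words
   d1 d1 d2 d2 ... dn dn.  Suppose a SAFA with m sets accepts L^* and feed it
   0 0 1 1 ... m m.  The second letter of each block s s is read under a guard
   on some set.  If that guard is !p(h), or p(h) for a set holding a value other
   than s, the second s can be replaced by a value satisfying the same guard that
   never occurs later (a fresh value, resp. that other value, which is < s): the
   run still succeeds and accepts a word outside L^*.  Otherwise the guard is
   p(h) for a set containing only s; as all earlier values are < s, this set was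
   empty before the block and is not afterwards.  Since sets only grow, this can
   happen for at most m of the m + 1 blocks. *)
From mathcomp Require Import all_boot zify.
Set Implicit Arguments. Unset Strict Implicit. Unset Printing Implicit Defensive.

Definition sets_below m (S : sets m) (s : data) := forall k v, v \in S k -> v < s.

Definition empty_count m (S : sets m) := #|[pred k | S k == [::]]|.

Lemma empty_count_le m (S : sets m) : empty_count S <= m.
Proof. by rewrite -[m in _ <= m]card_ord max_card. Qed.

Lemma empty_count_lt m (S S' : sets m) k :
  (forall i, {subset S i <= S' i}) -> S k == [::] -> S' k != [::] ->
  empty_count S' < empty_count S.
Proof.
move=> subS Sk S'k; apply/proper_card/properP; split.
  apply/subsetP => i; rewrite !inE => /eqP S'i.
  by case: (S i) (subS i) => // v ? /(_ v); rewrite S'i mem_head => /(_ isT).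
by exists k; rewrite inE.
Qed.

Lemma mem_upd m (o : op m) S d k v : v \in S k -> v \in upd o S d k.
Proof. by case: o => //= j; case: (k == j); rewrite // inE => ->; rewrite orbT. Qed.

Lemma mem_upd_inv m (o : op m) S d k v : v \in upd o S d k -> (v \in S k) || (v == d).
Proof.
case: o => [|j] /=; first by move->.
case: (k == j); rewrite ?inE; last by move->.
by case/orP=> ->; rewrite ?orbT.
Qed.

Lemma mem_upd_neq m (o : op m) S d k v : v != d -> (v \in upd o S d k) = (v \in S k).
Proof. by move=> /negbTE vd; case: o => //= j; case: (k == j); rewrite ?inE ?vd. Qed.

Lemma upd_below m (o : op m) S d t : sets_below S t -> d < t -> sets_below (upd o S d) t.
Proof. by move=> St d_t k v /mem_upd_inv/orP[/St|/eqP->]. Qed.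

Lemma sat_escape m (c : cond m) (S : sets m) s t :
  sets_below S s.+1 -> s < t -> sat c S s ->
  (exists d, [/\ d != s, (d < s) || (d == t) & sat c S d]) \/
  (exists k, c = CIn k /\ {subset S k <= [:: s]}).
Proof.
case: c => k S_below s_t /= s_Sk.
  have [/hasP[v Sk_v v_s] | /hasPn only_s] := boolP (has (predC1 s) (S k)).
    left; exists v; split=> //; have := S_below k v Sk_v; move: v_s => /=; lia.
  by right; exists k; split=> // v /only_s; rewrite /= inE negbK.
left; exists t; split; rewrite ?eqxx ?orbT //; first lia.
by apply/negP=> /S_below; lia.
Qed.

Section Acceptance.

Variables (Sigma : finType) (M : safa Sigma).

Lemma acc_from_eq_mem w (q : st M) (S S' : sets (nsets M)) :
  (forall k v, v \in map snd w -> (v \in S k) = (v \in S' k)) ->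
  acc_from q S w -> acc_from q S' w.
Proof.
elim: w q S S' => [|[a d] w IHw] q S S' eqSS' //=.
case=> c [o [q' [delta_c sat_c acc_w]]]; exists c, o, q'; split=> //.
  by case: c sat_c {delta_c} => k /=; rewrite eqSS' ?mem_head.
apply: IHw acc_w => k v w_v.
have eqv : (v \in S k) = (v \in S' k) by rewrite eqSS' // inE w_v orbT.
by case: o {delta_c} => [|j] //=; case: (k == j); rewrite ?inE eqv.
Qed.

(* The configurations reached on [d] and on [d'] differ only on these two values,
   which the suffix never reads. *)
Lemma acc_from_relabel (q q' : st M) S a d d' w c o :
  delta q a c o q' -> sat c S d' -> d \notin map snd w -> d' \notin map snd w ->
  acc_from q' (upd o S d) w -> acc_from q S ((a, d') :: w).
Proof.
move=> delta_c sat_c w_d w_d' acc_w; exists c, o, q'; split=> //.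
apply: acc_from_eq_mem acc_w => k v w_v.
by rewrite !mem_upd_neq //; apply/eqP=> eq_v; [move: w_d' | move: w_d]; rewrite -eq_v w_v.
Qed.

End Acceptance.

Definition twin (d : data) : dword unit := [:: (tt, d); (tt, d)].

Definition twins : dlang unit := fun w => exists d, w = twin d.

Definition twins_from (s n : nat) : dword unit := flatten (map twin (iota s n)).

Lemma twins_from_data s n v : v \in map snd (twins_from s n) -> s <= v < s + n.
Proof.
elim: n s => [|n IHn] s //=; rewrite !inE.
by case/orP=> [/eqP->|/orP[/eqP->|/IHn]]; lia.
Qed.

Lemma kstar_twins_from s n : kstar twins (twins_from s n).
Proof. by exists (map twin (iota s n)); split=> // u /mapP[d _ ->]; exists d. Qed.

Fixpoint paired (w : dword unit) : bool :=
  if w is x :: y :: w' then (x == y) && paired w' else w == [::].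

Lemma kstar_twins_paired w : kstar twins w -> paired w.
Proof.
case=> us [us_twins ->]; elim: us us_twins => //= u us IHus us_twins.
have [d ->] := us_twins u (mem_head u us).
by rewrite /= eqxx IHus // => v us_v; apply: us_twins; rewrite inE us_v orbT.
Qed.

Section Pumping.

Variable M : safa unit.

Lemma twin_step s t (q : st M) S w :
  sets_below S s -> s < t -> (forall v, v \in map snd w -> s < v) -> t \notin map snd w ->
  acc_from q S (twin s ++ w) ->
  (exists2 d, d != s & acc_from q S ((tt, s) :: (tt, d) :: w)) \/
  exists (q' : st M) (S' : sets (nsets M)),
    [/\ acc_from q' S' w, sets_below S' s.+1, empty_count S' < empty_count S
       & forall w', acc_from q' S' w' -> acc_from q S (twin s ++ w')].
Proof.
move=> S_below s_t w_gt w_t /= [c1 [o1 [q1 [delta1 sat1 [c2 [o2 [q2 [delta2 sat2 acc_w]]]]]]]].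
have S1_below : sets_below (upd o1 S s) s.+1.
  by apply: upd_below => // k v /S_below /ltnW.
have [[d [d_s d_fresh sat_d]] | [k [c2_k S1k_s]]] := sat_escape S1_below s_t sat2.
  left; exists d => //; exists c1, o1, q1; split=> //.
  apply: acc_from_relabel delta2 sat_d _ _ acc_w.
    by apply/negP=> /w_gt; rewrite ltnn.
  by case/orP: d_fresh => [d_lt_s | /eqP->] //; apply/negP=> /w_gt; lia.
move: delta2 sat2 acc_w; rewrite c2_k => delta2 s_S1k acc_w.
right; exists q2, (upd o2 (upd o1 S s) s); split=> //.
- exact: upd_below.
- apply: (@empty_count_lt _ _ _ k) => [i v /(mem_upd o1 s)/(mem_upd o2 s) //| |].
    case E: (S k) => [//|v vs]; have Sk_v : v \in S k by rewrite E mem_head.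
    have := S1k_s v (mem_upd o1 s Sk_v); rewrite inE => /eqP v_s.
    by have := S_below k v Sk_v; rewrite v_s ltnn.
  by apply/eqP=> S2k_nil; have := mem_upd o2 s s_S1k; rewrite S2k_nil.
- by move=> w' acc_w'; exists c1, o1, q1; split=> //; exists (CIn k), o2, q2.
Qed.

Lemma twins_from_unpaired n s (q : st M) S :
  sets_below S s -> empty_count S < n -> acc_from q S (twins_from s n) ->
  exists2 w, acc_from q S w & ~~ paired w.
Proof.
elim: n s q S => // n IHn s q S S_below S_count acc.
have w_gt v : v \in map snd (twins_from s.+1 n) -> s < v by move/twins_from_data; lia.
have w_t : s.+1 + n \notin map snd (twins_from s.+1 n).
  by apply/negP=> /twins_from_data; lia.
have [[d d_s acc_d] | [q' [S' [acc' S'_below S'_count back]]]] :=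
  twin_step S_below (ltn_addr n (ltnSn s)) w_gt w_t acc.
  exists ((tt, s) :: (tt, d) :: twins_from s.+1 n) => //=.
  by rewrite xpair_eqE eq_sym (negbTE d_s).
have [w acc_w unpaired_w] := IHn s.+1 q' S' S'_below (leq_trans S'_count S_count) acc'.
by exists (twin s ++ w); [apply: back | rewrite /= eqxx].
Qed.

End Pumping.

Definition twins_delta (q : 'I_3) (a : unit) (c : cond 1) (o : op 1) (q' : 'I_3) : bool :=
  match c, o with
  | CNotIn _, OIns _ => (q == 0 :> nat) && (q' == 1 :> nat)
  | CIn _, ONop => (q == 1 :> nat) && (q' == 2 :> nat)
  | _, _ => false
  end.

Definition twins_safa : safa unit :=
  Safa (ord0 : 'I_3) (fun q : 'I_3 => q == 2 :> nat) twins_delta.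

Lemma twins_safa_final (q : st twins_safa) S w :
  q = 2 :> nat -> acc_from q S w -> w = [::].
Proof.
case: w => [|[a d] w] //= q2 [c [o [q' [+ _ _]]]].
by rewrite /= /twins_delta q2; case: c o => ? [|?].
Qed.

Lemma twins_safa_second (q : st twins_safa) S w :
  q = 1 :> nat -> acc_from q S w -> exists2 d, w = [:: (tt, d)] & d \in S ord0.
Proof.
case: w => [|[[] d] w] /= q1; first by rewrite q1.
case=> c [o [q' [+ sat_c acc_w]]]; rewrite /= /twins_delta q1.
case: c o sat_c acc_w => k [|j] //= k_d acc_w /eqP q'2.
exists d; first by rewrite (twins_safa_final q'2 acc_w).
by rewrite -(ord1 k).
Qed.

Lemma twins_safa_lang w : lang twins_safa w <-> twins w.
Proof.
split; last first.
  case=> d ->; exists (CNotIn ord0), (OIns ord0), (@Ordinal 3 1 isT); split=> //.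
  by exists (CIn ord0), (@ONop 1), (@Ordinal 3 2 isT); rewrite /= inE.
case: w => [|[[] d] w] //= [c [o [q' [+ _ acc_w]]]]; rewrite /= /twins_delta.
case: c o acc_w => k [|j] //= acc_w /eqP q'1.
have [d' -> ] := twins_safa_second q'1 acc_w.
by rewrite (ord1 j) eqxx inE => /eqP->; exists d.
Qed.

Theorem theorem7 :
  exists (Sigma : finType) (L : dlang Sigma), safa_lang L /\ ~ safa_lang (kstar L).
Proof.
exists unit, twins; split; first by exists twins_safa; exact: twins_safa_lang.
case=> M accepts_kstar.
have [w acc_w] := twins_from_unpaired (n := (nsets M).+1) (s := 0) (q := q0 M)
  (S := @empty_sets (nsets M)) (fun _ _ => id) (empty_count_le _)
  (proj2 (accepts_kstar _) (kstar_twins_from 0 (nsets M).+1)).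
by rewrite kstar_twins_paired // -accepts_kstar.
Qed.
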